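(* There exist context-free languages $L_1$ and $L_2$ such that $L_1 \stackrel{\rm pgi}{\leftarrow} L_1$ and $L_2 \stackrel{\rm sgi}{\leftarrow} L_2$ are not context-free.
   Context: Prefix-guided insertion: $x \stackrel{\rm pgi}{\leftarrow} y = \{ x_1 y_1 y_2 x_2 \mid x = x_1 y_1 x_2,\ y = y_1 y_2,\ y_1 \neq \varepsilon \}$. Suffix-guided insertion: $x \stackrel{\rm sgi}{\leftarrow} y = \{ x_1 y_1 y_2 x_2 \mid x = x_1 y_2 x_2,\ y = y_1 y_2,\ y_2 \neq \varepsilon \}$. Both are extended to languages by union over all pairs of strings. *)

From mathcomp Require Import all_boot.
Set Implicit Arguments. Unset Strict Implicit. Unset Printing Implicit Defensive.

Definition lang (Sigma : Type) := seq Sigma -> Prop.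

Record cfg (Sigma : finType) (N : finType) := CFG {
  cfg_start : N;
  cfg_rules : seq (N * seq (N + Sigma))
}.

Inductive cfg_step (Sigma : finType) (N : finType) (G : cfg Sigma N) :
    seq (N + Sigma) -> seq (N + Sigma) -> Prop :=
| CfgStep (u v alpha : seq (N + Sigma)) (A : N) :
    (A, alpha) \in cfg_rules G ->
    cfg_step G (u ++ inl A :: v) (u ++ alpha ++ v).

Inductive cfg_derives (Sigma : finType) (N : finType) (G : cfg Sigma N) :
    seq (N + Sigma) -> seq (N + Sigma) -> Prop :=
| CfgRefl s : cfg_derives G s s
| CfgTrans s t r : cfg_step G s t -> cfg_derives G t r -> cfg_derives G s r.

Definition cfg_lang (Sigma : finType) (N : finType) (G : cfg Sigma N) : lang Sigma :=
  fun w => cfg_derives G [:: inl (cfg_start G)] (map inr w).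

Definition context_free (Sigma : finType) (L : lang Sigma) : Prop :=
  exists (N : finType) (G : cfg Sigma N), forall w, L w <-> cfg_lang G w.

Definition pgi_word (Sigma : Type) (x y w : seq Sigma) : Prop :=
  exists x1 y1 x2 y2,
    [/\ x = x1 ++ y1 ++ x2, y = y1 ++ y2, y1 <> [::] & w = x1 ++ y1 ++ y2 ++ x2].

Definition sgi_word (Sigma : Type) (x y w : seq Sigma) : Prop :=
  exists x1 y1 x2 y2,
    [/\ x = x1 ++ y2 ++ x2, y = y1 ++ y2, y2 <> [::] & w = x1 ++ y1 ++ y2 ++ x2].

Definition pgi (Sigma : Type) (L1 L2 : lang Sigma) : lang Sigma :=
  fun w => exists x y, [/\ L1 x, L2 y & pgi_word x y w].

Definition sgi (Sigma : Type) (L1 L2 : lang Sigma) : lang Sigma :=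
  fun w => exists x y, [/\ L1 x, L2 y & sgi_word x y w].

From HB Require Import structures.
From mathcomp Require Import all_boot zify.
Set Implicit Arguments. Unset Strict Implicit. Unset Printing Implicit Defensive.

(* Take L = {a^n # b^n $} u {# b^n $ c^n}, which is context-free.  Both
   pgi L L and sgi L L contain every a^n # b^n $ c^n, and these are their
   only words with one #, one $, some a and some c.  Pumping a^n # b^n $ c^n
   down keeps # and $ (every word of the insertion has them), so x and z
   avoid the markers; pumping up then gives some a^k # b^k $ c^k in which
   x x and z z occur, so x and z are constant since a^k # b^k $ c^k is
   sorted; yet x z must contain a, b and c.  Reversing words and swapping
   a <-> c, # <-> $ maps L onto itself and turns sgi into pgi, which gives
   the second claim. *)

(** * Parse trees *)

Section ParseTrees.
Variables (Sigma N : finType) (G : cfg Sigma N).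

Inductive yield : N + Sigma -> seq Sigma -> Prop :=
| yield_leaf a : yield (inr a) [:: a]
| yield_node A alpha w :
    (A, alpha) \in cfg_rules G -> yields alpha w -> yield (inl A) w
with yields : seq (N + Sigma) -> seq Sigma -> Prop :=
| yields_nil : yields [::] [::]
| yields_cons x s w1 w2 : yield x w1 -> yields s w2 -> yields (x :: s) (w1 ++ w2).

Scheme yield_mut := Minimality for yield Sort Prop
  with yields_mut := Minimality for yields Sort Prop.

Lemma yield_inr a w : yield (inr a) w -> w = [:: a].
Proof. by move=> yw; inversion yw. Qed.

Lemma yield_inlP A w :
  yield (inl A) w -> exists2 alpha, (A, alpha) \in cfg_rules G & yields alpha w.
Proof. by move=> yw; inversion yw; exists alpha. Qed.

Lemma yields_nilP w : yields [::] w -> w = [::].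
Proof. by move=> yw; inversion yw. Qed.

Lemma yields_consP x s w :
  yields (x :: s) w -> exists w1 w2, [/\ w = w1 ++ w2, yield x w1 & yields s w2].
Proof. by move=> yw; inversion yw; exists w1, w2. Qed.

Lemma yields_cat s1 s2 w1 w2 :
  yields s1 w1 -> yields s2 w2 -> yields (s1 ++ s2) (w1 ++ w2).
Proof.
elim=> [|x s u1 u2 yx _ IH] //= ys2.
by rewrite -catA; apply: yields_cons yx (IH ys2).
Qed.

Lemma yields_catP s1 s2 w :
  yields (s1 ++ s2) w -> exists w1 w2, [/\ w = w1 ++ w2, yields s1 w1 & yields s2 w2].
Proof.
elim: s1 w => [|x s1 IH] w /=; first by exists [::], w; split=> //; constructor.
case/yields_consP=> [u1 [u2 [-> yx /IH [v1 [v2 [-> ys1 ys2]]]]]].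
by exists (u1 ++ v1), v2; split; [rewrite catA | constructor |].
Qed.

Lemma yields_terminals w : yields (map inr w) w.
Proof. by elim: w => [|a w IH]; [constructor | apply: (yields_cons (yield_leaf a) IH)]. Qed.

Lemma derives_trans s t r :
  cfg_derives G s t -> cfg_derives G t r -> cfg_derives G s r.
Proof. by elim=> // s0 t0 r0 st _ IH /IH; apply: CfgTrans. Qed.

Lemma derives_context u v s t :
  cfg_derives G s t -> cfg_derives G (u ++ s ++ v) (u ++ t ++ v).
Proof.
elim=> [s0|s0 t0 r0 [p q alpha A rule] _ IH]; first exact: CfgRefl.
apply: CfgTrans IH; have := CfgStep (u ++ p) (q ++ v) rule.
by rewrite -!catA.
Qed.

Lemma derives_cat s1 t1 s2 t2 : cfg_derives G s1 t1 -> cfg_derives G s2 t2 ->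
  cfg_derives G (s1 ++ s2) (t1 ++ t2).
Proof.
move=> d1 d2; apply: (@derives_trans _ (t1 ++ s2)).
  by have := derives_context [::] s2 d1.
by have := derives_context t1 [::] d2; rewrite !cats0.
Qed.

Lemma yield_derives x w : yield x w -> cfg_derives G [:: x] (map inr w).
Proof.
move: x w; apply: (@yield_mut _ (fun s w => cfg_derives G s (map inr w))).
- by move=> a; apply: CfgRefl.
- move=> A alpha u rule _ IH; apply: CfgTrans IH.
  by have := CfgStep [::] [::] rule; rewrite cats0.
- exact: CfgRefl.
- by move=> y s w1 w2 _ IH1 _ IH2; rewrite map_cat; exact: (derives_cat IH1 IH2).
Qed.

Lemma derives_yields s w : cfg_derives G s (map inr w) -> yields s w.
Proof.
move Ew: (map inr w) => t d; elim: d w Ew => [s0|s0 t0 r0 [p q alpha A rule] _ IH] w Ew.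
  by rewrite -Ew; apply: yields_terminals.
case/yields_catP: (IH w Ew) => [w1 [w23 [-> yp]]].
case/yields_catP=> [w2 [w3 [-> yalpha yq]]].
by apply: yields_cat yp (yields_cons (yield_node rule yalpha) yq).
Qed.

Lemma cfg_langE w : cfg_lang G w <-> yield (inl (cfg_start G)) w.
Proof.
split=> [/derives_yields/yields_consP [w1 [w2 [-> y1 /yields_nilP ->]]]|/yield_derives //].
by rewrite cats0.
Qed.

End ParseTrees.

Arguments yield_leaf {Sigma N G}.
Arguments yields_nil {Sigma N G}.

(** * The pumping lemma *)

Section Pumping.
Variables (Sigma N : finType) (G : cfg Sigma N).
Local Notation yield := (yield G).
Local Notation yields := (yields G).

Definition rhs_bound := (\max_(r <- cfg_rules G) size r.2).+1.

Lemma size_rhs_lt A alpha : (A, alpha) \in cfg_rules G -> size alpha < rhs_bound.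
Proof. by move=> rule; rewrite ltnS (leq_bigmax_seq (F := fun r => size r.2) _ rule). Qed.

Definition heavy_child (P : N + Sigma -> seq Sigma -> Prop) alpha w :=
  w = [::] \/ exists l x r wl wx wr,
    [/\ alpha = l ++ x :: r, w = wl ++ wx ++ wr, yields l wl, yield x wx & yields r wr]
    /\ P x wx /\ size w <= size alpha * size wx.

(* Either x alone carries a share 1 / (size s).+1 of the yield, or the
   heavy child of s still carries one. *)
Lemma heavy_child_cons P x s w1 w2 : yield x w1 -> P x w1 -> yields s w2 ->
  heavy_child P s w2 -> heavy_child P (x :: s) (w1 ++ w2).
Proof.
move=> yx Px ys [w2_nil|[l [y [r [wl [wy [wr [[-> -> yl yy yr] [Py heavy]]]]]]]]].
  right; exists [::], x, s, [::], w1, [::]; subst w2; rewrite !cats0.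
  by split; [split=> //; exact: yields_nil | split=> //; rewrite mulSn leq_addr].
have [light|heavy1] := leqP (size (w1 ++ wl ++ wy ++ wr)) (size (x :: l ++ y :: r) * size w1).
  right; exists [::], x, (l ++ y :: r), [::], w1, (wl ++ wy ++ wr).
  by split; [split=> //; [exact: yields_nil | exact: yields_cat yl (yields_cons yy yr)] | split].
right; exists (x :: l), y, r, (w1 ++ wl), wy, wr; split; first split=> //.
- by rewrite -!catA.
- exact: yields_cons.
split=> //; move: heavy heavy1; rewrite /= !size_cat /= => heavy heavy1; nia.
Qed.

Lemma yield_heavy_ind (P : N + Sigma -> seq Sigma -> Prop) :
  (forall a, P (inr a) [:: a]) ->
  (forall A alpha w, (A, alpha) \in cfg_rules G -> yields alpha w ->
     heavy_child P alpha w -> P (inl A) w) ->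
  forall x w, yield x w -> P x w.
Proof.
move=> Pleaf Pnode; apply: (@yield_mut _ _ _ P (heavy_child P)) => //.
- by left.
- by move=> x s w1 w2 yx Px ys; apply: heavy_child_cons.
Qed.

Definition in_context A u B v :=
  forall w, yield (inl B) w -> yield (inl A) (u ++ w ++ v).

Lemma in_context_refl A : in_context A [::] A [::].
Proof. by move=> w; rewrite cats0. Qed.

Lemma in_context_trans A u B v u' D v' :
  in_context A u B v -> in_context B u' D v' -> in_context A (u ++ u') D (v' ++ v).
Proof. by move=> ctxA ctxB w /ctxB /ctxA; rewrite -!catA. Qed.

Lemma in_context_rule A l B r wl wr : (A, l ++ inl B :: r) \in cfg_rules G ->
  yields l wl -> yields r wr -> in_context A wl B wr.
Proof.
by move=> rule yl yr w yw; apply: yield_node rule _; apply: yields_cat yl (yields_cons yw yr).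
Qed.

Lemma in_context_iter B x z i : in_context B x B z ->
  in_context B (flatten (nseq i x)) B (flatten (nseq i z)).
Proof.
have powSr (y : seq Sigma) j : flatten (nseq j.+1 y) = flatten (nseq j y) ++ y.
  by elim: j => [|j IH] /=; rewrite ?cats0 // -catA -IH.
move=> ctx; elim: i => [|i IH]; first exact: in_context_refl.
by rewrite powSr; apply: in_context_trans IH ctx.
Qed.

Definition pumpable A w := exists u x y z v B,
  [/\ w = u ++ x ++ y ++ z ++ v, in_context A u B v, in_context B x B z,
      x ++ z <> [::] & yield (inl B) y].

Definition occurs_below A w B := exists u y v,
  [/\ w = u ++ y ++ v, in_context A u B v & yield (inl B) y].

Lemma occurs_below_refl A w : yield (inl A) w -> occurs_below A w A.
Proof. by exists [::], w, [::]; rewrite cats0; split=> //; apply: in_context_refl. Qed.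

Lemma pumpable_in_context A u B v w :
  in_context A u B v -> pumpable B w -> pumpable A (u ++ w ++ v).
Proof.
move=> ctx [u' [x [y [z [v' [D [-> ctxB ctxD xz yD]]]]]]].
exists (u ++ u'), x, y, z, (v' ++ v), D; split=> //; first by rewrite -!catA.
exact: in_context_trans ctxB.
Qed.

Lemma occurs_below_in_context A u B v w D :
  in_context A u B v -> occurs_below B w D -> occurs_below A (u ++ w ++ v) D.
Proof.
move=> ctx [u' [y [v' [-> ctxB yD]]]].
exists (u ++ u'), y, (v' ++ v); split=> //; first by rewrite -!catA.
exact: in_context_trans ctxB.
Qed.

Definition pumpable_or_deep A w j := pumpable A w \/
  exists X : {set N}, j < #|X| /\ forall B, B \in X -> occurs_below A w B.

Lemma pumpable_or_deep_in_context A u B v w j :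
  in_context A u B v -> pumpable_or_deep B w j -> pumpable_or_deep A (u ++ w ++ v) j.
Proof.
move=> ctx [pump|[X [sizeX below]]]; first by left; apply: pumpable_in_context pump.
by right; exists X; split=> // D /below; apply: occurs_below_in_context.
Qed.

(* A nonempty context either closes a loop at A (if A already occurs below)
   or adds A as a new nonterminal on the path. *)
Lemma pumpable_or_deep_step A u B v w j :
  in_context A u B v -> u ++ v != [::] -> yield (inl A) (u ++ w ++ v) ->
  pumpable_or_deep B w j -> pumpable_or_deep A (u ++ w ++ v) j.+1.
Proof.
move=> ctx ctx_nonempty yA [pump|[X [sizeX below]]].
  by left; apply: pumpable_in_context pump.
have [AX|AnX] := boolP (A \in X).
  left; have [u' [y [v' [-> ctxB yA']]]] := below _ AX.
  exists [::], (u ++ u'), y, (v' ++ v), [::], A; split=> //.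
  - by rewrite /= cats0 -!catA.
  - exact: in_context_refl.
  - exact: in_context_trans ctx ctxB.
  move/eqP; apply/negP; move: ctx_nonempty; apply: contra.
  by rewrite -!size_eq0 !size_cat !addn_eq0 => /andP[/andP[-> _] /andP[_ ->]].
right; exists (A |: X); split; first by rewrite cardsU1 AnX.
move=> D; rewrite in_setU1 => /predU1P[->|/below]; first exact: occurs_below_refl.
exact: occurs_below_in_context.
Qed.

(* A yield longer than rhs_bound ^ j forces a path through j + 1 nonterminal
   nodes whose contexts are all nonempty; either two of them carry the same
   nonterminal, or they are distinct. *)
Definition pump_invariant (x : N + Sigma) w :=
  if x is inl A then forall j, rhs_bound ^ j < size w -> pumpable_or_deep A w j
  else True.

Lemma pump_invariant_node A alpha w : (A, alpha) \in cfg_rules G -> yields alpha w ->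
  heavy_child pump_invariant alpha w -> pump_invariant (inl A) w.
Proof.
move=> rule yalpha [-> j|]; first by rewrite ltn0.
have yA : yield (inl A) w := yield_node rule yalpha.
case=> l [x [r [wl [wx [wr [[Ealpha Ew yl yx yr] [IHx heavy]]]]]]]; subst w; case=> [|j] big.
  right; exists [set A]; rewrite cards1; split=> // B.
  by rewrite inE => /eqP ->; apply: occurs_below_refl.
have alpha_lt := size_rhs_lt rule.
case: x Ealpha yx IHx heavy => [B|a] Ealpha yx IHx heavy; last first.
  rewrite (yield_inr yx) in heavy big; rewrite /= muln1 in heavy.
  have bound_pos : 0 < rhs_bound ^ j by rewrite expn_gt0.
  have := leq_trans (leq_ltn_trans heavy alpha_lt) (leq_pmulr _ bound_pos).
  by rewrite -expnS ltnNge (ltnW big).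
have ctx : in_context A wl B wr by apply: in_context_rule yl yr; rewrite -Ealpha.
have [/eqP|ctx_nonempty] := eqVneq (wl ++ wr) [::].
  case: wl wr {yl yr yA yalpha} => [|//] [|//] in big heavy ctx * => _.
  by apply: pumpable_or_deep_in_context ctx _; apply: IHx; rewrite /= cats0 in big.
apply: pumpable_or_deep_step ctx ctx_nonempty yA _; apply: IHx.
rewrite -(@ltn_pmul2l rhs_bound) // -expnS (leq_trans big) // (leq_trans heavy) //.
by rewrite leq_mul2r (ltnW alpha_lt) orbT.
Qed.

Lemma yield_pumping A w : yield (inl A) w -> rhs_bound ^ #|N| < size w ->
  exists u x y z v, [/\ w = u ++ x ++ y ++ z ++ v, x ++ z <> [::] &
    forall i, yield (inl A) (u ++ flatten (nseq i x) ++ y ++ flatten (nseq i z) ++ v)].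
Proof.
have inv : forall x w, yield x w -> pump_invariant x w.
  by apply: yield_heavy_ind => // A' alpha w'; apply: pump_invariant_node.
move=> /inv /[apply] [[[u [x [y [z [v [B [-> ctxA ctxB xz yB]]]]]]]|[X [bigX _]]]].
  exists u, x, y, z, v; split=> // i.
  by have := ctxA _ (in_context_iter i ctxB yB); rewrite -!catA.
by move: (max_card X); rewrite leqNgt bigX.
Qed.

End Pumping.

Lemma context_free_pumping (Sigma : finType) (L : lang Sigma) : context_free L ->
  exists n, forall w, L w -> n < size w -> exists u x y z v,
    [/\ w = u ++ x ++ y ++ z ++ v, x ++ z <> [::] &
        forall i, L (u ++ flatten (nseq i x) ++ y ++ flatten (nseq i z) ++ v)].
Proof.
case=> N [G LG]; exists (rhs_bound G ^ #|N|) => w /LG /cfg_langE yw /(yield_pumping yw).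
case=> u [x [y [z [v [-> xz pump]]]]]; exists u, x, y, z, v; split=> // i.
exact/LG/cfg_langE.
Qed.

Lemma context_free_ext (Sigma : finType) (L1 L2 : lang Sigma) :
  (forall w, L1 w <-> L2 w) -> context_free L1 -> context_free L2.
Proof. by move=> L12 [N [G LG]]; exists N, G => w; rewrite -L12. Qed.

Lemma cat_cons_notin_inj (T : eqType) (s : T) p q p' q' :
  s \notin p -> s \notin p' -> p ++ s :: q = p' ++ s :: q' -> p = p' /\ q = q'.
Proof.
move=> sp sp' E; have size_p : size p = size p'.
  by rewrite -(index_pivot q sp) -(index_pivot q' sp') E.
by move/eqP: E; rewrite eqseq_cat // => /andP[/eqP -> /eqP [->]].
Qed.

Lemma nseq_notin (T : eqType) (s t : T) n : s != t -> s \notin nseq n t.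
Proof. by rewrite mem_nseq => /negPf ->; rewrite andbF. Qed.

Lemma nseq_prefix_notin (T : eqType) (s : T) n p q :
  p ++ q = nseq n s -> s \notin p -> p = [::].
Proof. by case: p => // h p; case: n => //= n [-> _]; rewrite inE eqxx. Qed.

Lemma rcons_suffix_notin (T : eqType) (s : T) u y1 y2 :
  y1 ++ y2 = rcons u s -> s \notin y2 -> y2 = [::].
Proof.
case/lastP: y2 => // y2 t; rewrite -rcons_cat => /rcons_inj [_ ->].
by rewrite mem_rcons mem_head.
Qed.

Lemma pairwise_nseq_cat (T : Type) (e : rel T) s n t :
  e s s -> all (e s) t -> pairwise e t -> pairwise e (nseq n s ++ t).
Proof.
move=> ess est et; elim: n => //= n ->; rewrite andbT all_cat est andbT.
by rewrite all_nseq ess orbT.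
Qed.

Lemma constant_square (T : eqType) (e : rel T) p x q :
  antisymmetric e -> pairwise e (p ++ x ++ x ++ q) -> constant x.
Proof.
move=> e_anti; rewrite !pairwise_cat => /and3P[_ _ /and3P[/allrelP xx _ _]].
case: x xx => //= s x xx; apply/allP=> t tx; apply/eqP/e_anti.
by apply/andP; split; apply: xx; rewrite !inE ?mem_cat ?eqxx ?tx ?orbT.
Qed.

Lemma constant_cat_uniq_size (T : eqType) (x z s : seq T) :
  constant x -> constant z -> uniq s -> {subset s <= x ++ z} -> size s <= 2.
Proof.
case: s => [//|s0 s] /(constantP s0) [t1 Ex] /(constantP s0) [t2 Ez] us sub.
apply: (leq_trans (uniq_leq_size (s2 := [:: t1; t2]) us _)) => // u /sub.
by rewrite Ex Ez mem_cat !mem_nseq !inE => /orP[/andP[_ ->]|/andP[_ ->]]; rewrite ?orbT.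
Qed.

Section GuidedInsertionReversal.
Variables (S T : Type) (f : S -> T).

Lemma pgi_word_map x y w : pgi_word x y w -> pgi_word (map f x) (map f y) (map f w).
Proof.
case=> x1 [y1 [x2 [y2 [-> -> y1_nil ->]]]].
exists (map f x1), (map f y1), (map f x2), (map f y2); rewrite !map_cat.
by split=> //; case: y1 y1_nil.
Qed.

Lemma sgi_word_map x y w : sgi_word x y w -> sgi_word (map f x) (map f y) (map f w).
Proof.
case=> x1 [y1 [x2 [y2 [-> -> y2_nil ->]]]].
exists (map f x1), (map f y1), (map f x2), (map f y2); rewrite !map_cat.
by split=> //; case: y2 y2_nil.
Qed.

Lemma pgi_word_rev x y w : pgi_word x y w -> sgi_word (rev x) (rev y) (rev (w : seq S)).
Proof.
case=> x1 [y1 [x2 [y2 [-> -> y1_nil ->]]]].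
exists (rev x2), (rev y2), (rev x1), (rev y1); rewrite !rev_cat -!catA.
by split=> // /(congr1 rev); rewrite revK; apply: y1_nil.
Qed.

Lemma sgi_word_rev x y w : sgi_word x y w -> pgi_word (rev x) (rev y) (rev (w : seq S)).
Proof.
case=> x1 [y1 [x2 [y2 [-> -> y2_nil ->]]]].
exists (rev x2), (rev y2), (rev x1), (rev y1); rewrite !rev_cat -!catA.
by split=> // /(congr1 rev); rewrite revK; apply: y2_nil.
Qed.

End GuidedInsertionReversal.

(** * The language {a^n # b^n $} u {# b^n $ c^n} *)

Inductive letter := la | lhash | lb | ldollar | lc.

Definition letter_rank (s : letter) : nat :=
  match s with la => 0 | lhash => 1 | lb => 2 | ldollar => 3 | lc => 4 end.

Lemma letter_rank_lt s : letter_rank s < 5. Proof. by case: s. Qed.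

Definition letter_of_rank (n : nat) : letter :=
  match n with 0 => la | 1 => lhash | 2 => lb | 3 => ldollar | _ => lc end.

Lemma letter_rankK :
  cancel (fun s => Ordinal (letter_rank_lt s)) (fun i : 'I_5 => letter_of_rank i).
Proof. by case. Qed.

HB.instance Definition _ := Finite.copy letter (can_type letter_rankK).

Definition ab_word n := nseq n la ++ lhash :: nseq n lb ++ [:: ldollar].
Definition bc_word n := lhash :: nseq n lb ++ ldollar :: nseq n lc.
Definition abc_word n := nseq n la ++ lhash :: nseq n lb ++ ldollar :: nseq n lc.

Definition ab_or_bc : lang letter := fun w => exists n, w = ab_word n \/ w = bc_word n.

Lemma ab_word_in n : ab_or_bc (ab_word n). Proof. by exists n; left. Qed.
Lemma bc_word_in n : ab_or_bc (bc_word n). Proof. by exists n; right. Qed.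

Lemma count_abc_word s n :
  count_mem s (abc_word n) = if s \in [:: lhash; ldollar] then 1 else n.
Proof. by rewrite /abc_word !count_cat /= count_cat /= !count_nseq; case: s => /=; lia. Qed.

Lemma ab_or_bc_marks w :
  ab_or_bc w -> count_mem lhash w = 1 /\ count_mem ldollar w = 1.
Proof.
by case=> n [->|->]; rewrite /ab_word /bc_word ?count_cat /= ?count_cat /= !count_nseq.
Qed.

Lemma la_notin_bc_word n : la \notin bc_word n.
Proof. by rewrite /bc_word !(inE, mem_cat, mem_nseq) /= !andbF. Qed.

Lemma lc_notin_ab_word n : lc \notin ab_word n.
Proof. by rewrite /ab_word !(inE, mem_cat, mem_nseq) /= !andbF. Qed.

Lemma ab_or_bc_la_lc w : ab_or_bc w -> la \in w -> lc \notin w.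
Proof.
by case=> n [->|->] => [_|]; rewrite ?lc_notin_ab_word // (negPf (la_notin_bc_word n)).
Qed.

Lemma yield_balanced (Sigma N : finType) (G : cfg Sigma N) A (p m q : Sigma) w :
  (forall alpha, (A, alpha) \in cfg_rules G ->
     alpha = [:: inr p; inl A; inr q] \/ alpha = [:: inr m]) ->
  yield G (inl A) w -> exists n, w = nseq n p ++ m :: nseq n q.
Proof.
move=> rules_A; have [k] := ubnP (size w); elim: k => // k IH in w *.
rewrite ltnS => /[swap] /yield_inlP [alpha /rules_A [->|->]]; last first.
  by case/yields_consP=> [? [? [-> /yield_inr -> /yields_nilP ->]]]; exists 0.
case/yields_consP=> [? [? [-> /yield_inr -> /yields_consP [u [? [-> yu]]]]]].
case/yields_consP=> [? [? [-> /yield_inr -> /yields_nilP ->]]] size_w.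
have [|n ->] := IH u _ yu; first by move: size_w; rewrite /= !size_cat /=; lia.
by exists n.+1; rewrite cats0 -[in nseq n.+1 q]addn1 nseqD /= -catA.
Qed.

Lemma balanced_yield (Sigma N : finType) (G : cfg Sigma N) A (p m q : Sigma) n :
  (A, [:: inr p; inl A; inr q]) \in cfg_rules G -> (A, [:: inr m]) \in cfg_rules G ->
  yield G (inl A) (nseq n p ++ m :: nseq n q).
Proof.
move=> rec base; elim: n => [|n IH]; first exact: yield_node base (yields_terminals _ [:: m]).
apply: yield_node rec _.
have := yields_cons (yield_leaf p) (yields_cons IH (yields_cons (yield_leaf q) yields_nil)).
by rewrite cats0 -[in nseq n.+1 q]addn1 nseqD /= -catA.
Qed.

(* Start symbol [None]; [Some true] derives a^n # b^n and [Some false]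
   derives b^n $ c^n. *)
Definition ab_or_bc_grammar : cfg letter (option bool) :=
  CFG None [:: (None, [:: inl (Some true); inr ldollar]);
               (None, [:: inr lhash; inl (Some false)]);
               (Some true, [:: inr la; inl (Some true); inr lb]);
               (Some true, [:: inr lhash]);
               (Some false, [:: inr lb; inl (Some false); inr lc]);
               (Some false, [:: inr ldollar])].

Lemma ab_or_bc_context_free : context_free ab_or_bc.
Proof.
have rulesX alpha : (Some true, alpha) \in cfg_rules ab_or_bc_grammar ->
    alpha = [:: inr la; inl (Some true); inr lb] \/ alpha = [:: inr lhash].
  by rewrite !inE !xpair_eqE /= ?orbF => /orP[] /eqP ->; [left | right].
have rulesY alpha : (Some false, alpha) \in cfg_rules ab_or_bc_grammar ->
    alpha = [:: inr lb; inl (Some false); inr lc] \/ alpha = [:: inr ldollar].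
  by rewrite !inE !xpair_eqE /= ?orbF => /orP[] /eqP ->; [left | right].
exists _, ab_or_bc_grammar => w; rewrite cfg_langE; split.
  case=> n [->|->].
    apply: (yield_node (alpha := [:: inl (Some true); inr ldollar])) => //.
    have yX := @balanced_yield _ _ ab_or_bc_grammar (Some true) la lhash lb n isT isT.
    by have := yields_cons yX (yields_terminals _ [:: ldollar]); rewrite -catA.
  apply: (yield_node (alpha := [:: inr lhash; inl (Some false)])) => //.
  have yY := @balanced_yield _ _ ab_or_bc_grammar (Some false) lb ldollar lc n isT isT.
  by have := yields_cons (yield_leaf lhash) (yields_cons yY yields_nil); rewrite cats0.
case/yield_inlP=> alpha; rewrite !inE !xpair_eqE /= ?orbF => /orP[] /eqP ->.
  case/yields_consP=> [? [? [-> /(yield_balanced rulesX) [n ->]]]].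
  case/yields_consP=> [? [? [-> /yield_inr -> /yields_nilP ->]]].
  by exists n; left; rewrite /ab_word cats0 -catA.
case/yields_consP=> [? [? [-> /yield_inr -> /yields_consP [? [? [-> ]]]]]].
case/(yield_balanced rulesY)=> n -> /yields_nilP ->.
by exists n; right; rewrite cats0.
Qed.

(** * Prefix-guided insertion of the language into itself *)

Lemma bc_word_split m y1 y2 : y1 ++ y2 = bc_word m -> ldollar \in y1 -> lc \notin y1 ->
  y1 = lhash :: nseq m lb ++ [:: ldollar] /\ y2 = nseq m lc.
Proof.
move=> + y1d; case/splitPr: y1d => p1 p2; rewrite -catA /= => E c_y.
have p1d : ldollar \notin p1.
  apply/count_memPn; have [_] := ab_or_bc_marks (bc_word_in m).
  by rewrite -E count_cat /=; lia.
have d_pre : ldollar \notin lhash :: nseq m lb by rewrite inE mem_nseq andbF.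
have [-> E'] := cat_cons_notin_inj (p' := lhash :: nseq m lb) p1d d_pre E.
suff p2_nil : p2 = [::] by rewrite p2_nil in E' *.
by apply: (nseq_prefix_notin E'); apply: contra c_y; rewrite mem_cat inE => ->; rewrite !orbT.
Qed.

Lemma ab_word_factor n m x1 x2 : x1 ++ lhash :: nseq m lb ++ ldollar :: x2 = ab_word n ->
  [/\ x1 = nseq n la, m = n & x2 = [::]].
Proof.
move=> E; have x1h : lhash \notin x1.
  apply/count_memPn; have [] := ab_or_bc_marks (ab_word_in n).
  by rewrite -E count_cat /=; lia.
have [|-> E'] := cat_cons_notin_inj x1h _ E; first exact: nseq_notin.
have [||Eb ->] := cat_cons_notin_inj _ _ E'; try exact: nseq_notin.
by split=> //; move/(congr1 size): Eb; rewrite !size_nseq.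
Qed.

Lemma abc_word_pgi n : pgi ab_or_bc ab_or_bc (abc_word n).
Proof.
exists (ab_word n), (bc_word n); split; [exact: ab_word_in | exact: bc_word_in |].
exists (nseq n la), (lhash :: nseq n lb ++ [:: ldollar]), [::], (nseq n lc).
by split; rewrite ?cats0 //= -catA.
Qed.

Lemma pgi_ab_or_bc_abc w : pgi ab_or_bc ab_or_bc w ->
  count_mem lhash w = 1 -> count_mem ldollar w = 1 -> la \in w -> lc \in w ->
  exists n, w = abc_word n.
Proof.
case=> x [y [Lx Ly [x1 [y1 [x2 [y2 [Ex Ey _ ->]]]]]]] hash1 dollar1 aw cw.
have count_w s : count_mem s (x1 ++ y1 ++ y2 ++ x2) = count_mem s x + count_mem s y2.
  by rewrite Ex !count_cat; lia.
have mem_w s : (s \in x1 ++ y1 ++ y2 ++ x2) = (s \in x) || (s \in y2).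
  by rewrite -!has_pred1 !has_count count_w addn_gt0.
have [_ dollar_x] := ab_or_bc_marks Lx; have [_ dollar_y] := ab_or_bc_marks Ly.
have dollar_y2 : ldollar \notin y2 by apply/count_memPn; move: dollar1; rewrite count_w; lia.
case: Ly => m [Eym|Eym].
  (* y ends with $, so the inserted part y2 is empty and w = x *)
  have y2_nil : y2 = [::].
    apply: (@rcons_suffix_notin _ _ (nseq m la ++ lhash :: nseq m lb) y1) dollar_y2.
    by rewrite -Ey Eym rcons_cat rcons_cons -cats1.
  by move: aw cw; rewrite y2_nil /= -Ex => /(ab_or_bc_la_lc Lx) /negP.
have la_y2 : la \notin y2.
  by apply: contra (la_notin_bc_word m); rewrite -Eym Ey mem_cat => ->; rewrite orbT.
have [n Exn] : exists n, x = ab_word n.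
  case: Lx => n [|Exn]; first by exists n.
  by move: aw; rewrite mem_w (negPf la_y2) orbF Exn (negPf (la_notin_bc_word n)).
have c_y1 : lc \notin y1.
  by apply: contra (lc_notin_ab_word n); rewrite -Exn Ex !mem_cat => ->; rewrite orbT.
have dollar_y1 : ldollar \in y1.
  rewrite -has_pred1 has_count; move: dollar_y.
  by rewrite Ey count_cat (count_memPn dollar_y2) addn0 => ->.
have [Ey1 Ey2] := bc_word_split (etrans (esym Ey) Eym) dollar_y1 c_y1.
have [|Ex1 Emn Ex2] := @ab_word_factor n m x1 x2; first by rewrite -Exn Ex Ey1 /= -catA.
by exists n; rewrite Ex1 Ey1 Ey2 Ex2 Emn cats0 /= -catA.
Qed.

(** * Mirror image *)

Definition swap_letter (s : letter) : letter :=
  match s with la => lc | lhash => ldollar | lb => lb | ldollar => lhash | lc => la end.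

Lemma swap_letterK : involutive swap_letter. Proof. by case. Qed.

Definition mirror (w : seq letter) := rev (map swap_letter w).

Lemma mirrorK : involutive mirror.
Proof. by move=> w; rewrite /mirror map_rev revK (mapK swap_letterK). Qed.

Lemma mirror_cat u v : mirror (u ++ v) = mirror v ++ mirror u.
Proof. by rewrite /mirror map_cat rev_cat. Qed.

Lemma mirror_nseq n s : mirror (nseq n s) = nseq n (swap_letter s).
Proof. by rewrite /mirror map_nseq rev_nseq. Qed.

Lemma count_mirror s w : count_mem s (mirror w) = count_mem (swap_letter s) w.
Proof.
rewrite /mirror count_rev count_map; apply: eq_count => t /=.
exact: (inv_eq swap_letterK).
Qed.

Lemma mem_mirror s w : (s \in mirror w) = (swap_letter s \in w).
Proof. by rewrite -!has_pred1 !has_count count_mirror. Qed.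

Lemma mirror_ab_word n : mirror (ab_word n) = bc_word n.
Proof. by rewrite /ab_word -cat1s !mirror_cat !mirror_nseq /= -catA. Qed.

Lemma mirror_abc_word n : mirror (abc_word n) = abc_word n.
Proof. by rewrite /abc_word -cat1s !mirror_cat -cat1s !mirror_cat !mirror_nseq /= -!catA. Qed.

Lemma ab_or_bc_mirror w : ab_or_bc w -> ab_or_bc (mirror w).
Proof.
case=> n [->|->]; first by rewrite mirror_ab_word; apply: bc_word_in.
by rewrite -mirror_ab_word mirrorK; apply: ab_word_in.
Qed.

Lemma sgi_ab_or_bc_mirror w :
  sgi ab_or_bc ab_or_bc w <-> pgi ab_or_bc ab_or_bc (mirror w).
Proof.
split=> [[x [y [Lx Ly /(sgi_word_map swap_letter)/sgi_word_rev xyw]]]|[x [y [Lx Ly]]]].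
  by exists (mirror x), (mirror y); split=> //; apply: ab_or_bc_mirror.
move/(pgi_word_map swap_letter)/pgi_word_rev.
rewrite -[rev (map _ (mirror w))]/(mirror (mirror w)) mirrorK.
by exists (mirror x), (mirror y); split=> //; apply: ab_or_bc_mirror.
Qed.

(** * Non-context-freeness *)

Definition isolates_abc (M : lang letter) :=
  [/\ forall w, M w -> lhash \in w /\ ldollar \in w,
      forall w, M w -> count_mem lhash w = 1 -> count_mem ldollar w = 1 ->
        la \in w -> lc \in w -> exists n, w = abc_word n
    & forall n, M (abc_word n)].

Lemma isolates_abc_pgi : isolates_abc (pgi ab_or_bc ab_or_bc).
Proof.
split; [|exact: pgi_ab_or_bc_abc | exact: abc_word_pgi].
move=> w [x [y [_ Ly [x1 [y1 [x2 [y2 [_ Ey _ ->]]]]]]]].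
have sub : {subset y <= x1 ++ y1 ++ y2 ++ x2}.
  by move=> s; rewrite Ey !mem_cat => /orP[] ->; rewrite !orbT.
have [hash_y dollar_y] := ab_or_bc_marks Ly.
by split; apply: sub; rewrite -has_pred1 has_count ?hash_y ?dollar_y.
Qed.

Lemma isolates_abc_mirror M : isolates_abc M -> isolates_abc (fun w => M (mirror w)).
Proof.
case=> marks only all_abc; split.
- by move=> w /marks; rewrite !mem_mirror => -[].
- move=> w Mw hash1 dollar1 aw cw.
  have [||||n Ew] := only _ Mw; rewrite ?count_mirror ?mem_mirror //.
  by exists n; rewrite -(mirrorK w) Ew mirror_abc_word.
- by move=> n; rewrite mirror_abc_word.
Qed.

Definition letter_le (s t : letter) := letter_rank s <= letter_rank t.

Lemma letter_le_anti : antisymmetric letter_le.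
Proof. by move=> [] []. Qed.

Lemma abc_word_sorted n : pairwise letter_le (abc_word n).
Proof.
rewrite /abc_word -[lhash :: _]/(nseq 1 lhash ++ _) -[ldollar :: _]/(nseq 1 ldollar ++ _).
rewrite -[nseq n lc]cats0.
by do !apply: pairwise_nseq_cat; rewrite // !all_cat !all_nseq ?orbT.
Qed.

Lemma abc_word_square_factors u x y z v k :
  u ++ (x ++ x) ++ y ++ (z ++ z) ++ v = abc_word k -> ~ {subset [:: la; lb; lc] <= x ++ z}.
Proof.
move=> Ek abc_sub; have := abc_word_sorted k; rewrite -Ek -!catA => sorted_w.
have cx : constant x by apply: constant_square letter_le_anti sorted_w.
have cz : constant z.
  by apply: (constant_square letter_le_anti (p := u ++ x ++ x ++ y) (q := v)); rewrite -!catA.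
by move: (constant_cat_uniq_size (s := [:: la; lb; lc]) cx cz isT abc_sub).
Qed.

Lemma isolates_abc_not_context_free M : isolates_abc M -> ~ context_free M.
Proof.
case=> marks only all_abc /context_free_pumping [n pump].
have [|u [x [y [z [v [Ew xz pumpM]]]]]] := pump _ (all_abc n.+1).
  by rewrite /abc_word size_cat /= size_cat /= !size_nseq; lia.
have /= M0 := pumpM 0; have /= M2 := pumpM 2; rewrite !cats0 in M2.
have count0 (s : letter) : count_mem s (u ++ y ++ v) + count_mem s x + count_mem s z =
                           count_mem s (abc_word n.+1) by rewrite Ew !count_cat; lia.
have count2 (s : letter) : count_mem s (u ++ (x ++ x) ++ y ++ (z ++ z) ++ v) =
                           count_mem s (abc_word n.+1) + count_mem s x + count_mem s z.
  by rewrite Ew !count_cat; lia.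
have marks_free (s : letter) : s \in [:: lhash; ldollar] -> count_mem s x + count_mem s z = 0.
  move=> s_mark; have s_uyv : s \in u ++ y ++ v.
    by case: (marks _ M0); move: s_mark; rewrite !inE => /orP[] /eqP ->.
  move: (count0 s); rewrite count_abc_word s_mark -addnA => /eqP; rewrite addn_eq1.
  case/orP=> /andP[c_eq sum0]; first exact/eqP.
  by move/eqP/count_memPn: c_eq; rewrite s_uyv.
have [||||k Ek] := only _ M2.
- by rewrite count2 count_abc_word /= -addnA marks_free.
- by rewrite count2 count_abc_word /= -addnA marks_free.
- by rewrite -has_pred1 has_count count2 count_abc_word /= -!addnA addSn.
- by rewrite -has_pred1 has_count count2 count_abc_word /= -!addnA addSn.
have grow (s : letter) : s \notin [:: lhash; ldollar] ->
    k = n.+1 + (count_mem s x + count_mem s z).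
  by move=> s_letter; have := count2 s; rewrite Ek !count_abc_word (negPf s_letter) addnA.
apply: abc_word_square_factors Ek _.
have [s sxz] : exists s, s \in x ++ z.
  by case: (x ++ z) xz => [//|s t] _; exists s; rewrite mem_head.
have s_letter : s \notin [:: lhash; ldollar].
  by apply: contraL sxz => /marks_free; rewrite -has_pred1 has_count count_cat => ->.
move=> t t_letter; have t_nonmark : t \notin [:: lhash; ldollar] by case: t t_letter.
rewrite -has_pred1 has_count count_cat -(ltn_add2l n.+1) addn0 -(grow t t_nonmark).
by move: sxz; rewrite -has_pred1 has_count count_cat -(ltn_add2l n.+1) addn0 -grow.
Qed.

Theorem corollary5p2 :
  exists (Sigma : finType) (L1 L2 : lang Sigma),
    [/\ context_free L1, context_free L2,
        ~ context_free (pgi L1 L1) & ~ context_free (sgi L2 L2)].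
Proof.
exists letter, ab_or_bc, ab_or_bc; split; try exact: ab_or_bc_context_free.
  exact/isolates_abc_not_context_free/isolates_abc_pgi.
move/(context_free_ext sgi_ab_or_bc_mirror).
exact/isolates_abc_not_context_free/isolates_abc_mirror/isolates_abc_pgi.
Qed.
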